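(* Let $x,y,z\in\mathbb{C}^*$ with $x^N+y^N=z^N$. Then for all $k,l\in\mathbb{Z}$ (whenever both sides are defined), $$\omega(x,y,z\,|\,k-l)=\frac{\omega^{kl}\,\omega^{-\frac{l^2}{2}-\frac{k^2}{2}}}{\omega\big(z,\,-\omega^{1/2}y,\,\omega x\,\big|\,l-k\big)}.$$
   Context: $N\ge3$ odd, $N=2P+1$, $\omega=e^{2\pi i/N}$; for integers $r$, $\omega^{r/2}:=(\omega^{P+1})^r$ (so $\omega^{1/2}=\omega^{P+1}=-e^{i\pi/N}$). For $x,y,z\in\mathbb{C}^*$ with $x^N+y^N=z^N$ and $n\in\{0,\dots,N-1\}$, $\omega(x,y,z|n)=\prod_{j=1}^n\frac{y}{z-x\omega^j}$; since the product over $j=1,\dots,N$ equals $1$, this is extended $N$-periodically to $n\in\mathbb{Z}$. (Note $z^N+(-\omega^{1/2}y)^N=(\omega x)^N$.) *)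

From HB Require Import structures.
From mathcomp Require Import all_boot all_order all_algebra.
From mathcomp Require Import complex.
From mathcomp Require Import reals trigo.
Unset Printing Implicit Defensive.
Import Order.TTheory GRing.Theory Num.Theory.
Local Open Scope ring_scope.
Local Open Scope complex_scope.

Definition omg (R : realType) (N : nat) : R[i] :=
  (cos (2 * pi / N%:R)) +i* (sin (2 * pi / N%:R)).

(* omega^{1/2} := omega^{P+1}, where N = 2P+1 *)
Definition omg_half (R : realType) (N : nat) : R[i] := omg R N ^+ (N./2).+1.

Definition wfun (R : realType) (N : nat) (x y z : R[i]) (n : int) : R[i] :=
  \prod_(1 <= j < (absz (n %% N%:Z)%Z).+1) (y / (z - x * omg R N ^+ j)).

From HB Require Import structures.
From mathcomp Require Import all_boot all_order all_algebra.
From mathcomp Require Import complex.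
From mathcomp Require Import reals trigo.
From mathcomp Require Import ring lra zify.
Import Order.TTheory GRing.Theory Num.Theory.
Local Open Scope ring_scope.
Local Open Scope complex_scope.

(* Let n be the residue of k - l mod N, so that l - k has residue N - n (or 0).
   The partial products satisfy w(x,y,z|n) w(z,-ω^{1/2}y,ωx|N-n) = ω^{-n²/2}:
   lowering n by one drops the factor y/(z - xω^{n+1}) on the left and adds
   the factor of index N - n on the right, and the two differ exactly by
   ω^{(2n+1)/2}; at n = N the first product is y^N/(z^N - x^N) = 1.  The
   rotated triple again satisfies the Fermat equation, so its product over a
   full period is 1 as well, which handles n = 0.  Finally the prefactor equals
   ω^{-(k-l)²/2}, which only depends on n since ω^{1/2} has order dividing N. *)

Section RootOfUnity.
Context {R : realType} {N : nat}.
Local Notation ω := (omg R N).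

Lemma omg_exp (j : nat) :
  ω ^+ j = cos (j%:R * (2 * pi / N%:R)) +i* sin (j%:R * (2 * pi / N%:R)).
Proof.
elim: j => [|j IH]; first by rewrite expr0 !mul0r cos0 sin0.
rewrite exprS IH /omg; set t := 2 * pi / N%:R.
rewrite -[j.+1]addn1 natrD mulrDl mul1r cosD sinD.
by apply/eqP; rewrite eq_complex /=; apply/andP; split; apply/eqP; ring.
Qed.

Lemma cos_eq1_sin_half (v : R) : cos v = 1 -> sin (v / 2) = 0.
Proof.
have {1}-> : v = (v / 2) *+ 2 by rewrite mulr2n; field.
rewrite cos_mulr2n => cos_v.
have : sin (v / 2) ^+ 2 = 0 by rewrite sin2cos2; lra.
by move/eqP; rewrite sqrf_eq0 => /eqP.
Qed.

Hypothesis N_gt0 : (0 < N)%N.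

Lemma omg_expN : ω ^+ N = 1.
Proof.
rewrite omg_exp (_ : N%:R * _ = pi *+ 2) ?cos2pi ?sin2pi //.
by rewrite mulr2n; field; rewrite pnatr_eq0 -lt0n.
Qed.

Lemma omg_exp_neq1 (j : nat) : (0 < j < N)%N -> ω ^+ j != 1.
Proof.
case/andP=> j_gt0 j_ltN; have N_pos : 0 < N%:R :> R by rewrite ltr0n.
rewrite omg_exp; apply/negP => /eqP[/cos_eq1_sin_half/eqP + _]; apply/negP.
rewrite gt_eqF // sin_gt0_pi // (_ : _ / 2 = pi * (j%:R / N%:R)); last first.
  by field; rewrite gt_eqF.
rewrite mulr_gt0 ?divr_gt0 ?ltr0n ?pi_gt0 //=.
by rewrite gtr_pMr ?pi_gt0 // ltr_pdivrMr // mul1r ltr_nat.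
Qed.

Lemma omg_prim_root : N.-primitive_root ω.
Proof.
apply/andP; split => //; apply/forallP => i; apply/eqP; rewrite unity_rootE.
case: (ltngtP i.+1 N) => [lt_iN | /leq_trans /(_ (ltn_ord i)) | ->].
- by rewrite (negbTE (@omg_exp_neq1 i.+1 _)) ?lt_iN // ltn_eqF.
- by rewrite ltnn.
- by rewrite omg_expN eqxx.
Qed.

End RootOfUnity.

Lemma prod_subr_prim_root (F : fieldType) (n : nat) (u x z : F) :
  n.-primitive_root u -> \prod_(0 <= i < n) (z - x * u ^+ i) = z ^+ n - x ^+ n.
Proof.
move=> u_prim; have n_gt0 := prim_order_gt0 u_prim.
have [->|x_neq0] := eqVneq x 0.
  under eq_bigr do rewrite mul0r subr0.
  by rewrite prodr_const_nat subn0 expr0n gtn_eqF // subr0.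
have := congr1 (horner^~ (z / x)) (factor_Xn_sub_1 u_prim).
rewrite horner_prod !hornerE => prod_eq.
have -> : z ^+ n - x ^+ n = x ^+ n * ((z / x) ^+ n - 1).
  by rewrite mulrBr expr_div_n mulrCA divff ?expf_neq0 // !mulr1.
have -> : x ^+ n = \prod_(0 <= i < n) x by rewrite prodr_const_nat subn0.
rewrite -prod_eq -big_split /=.
by apply: eq_bigr => i _; rewrite !hornerE mulrBr mulrCA divff // mulr1.
Qed.

Lemma absz_modNz (r : int) (d : nat) : (0 < d)%N ->
  `|((- r) %% d)%Z|%N = ((d - `|(r %% d)%Z|%N) %% d)%N.
Proof.
move=> d_gt0; have d_neq0 : d%:Z != 0 by rewrite -lt0n.
have r_ltd : (`|(r %% d)%Z| <= d)%N.
  by rewrite -lez_nat gez0_abs ?modz_ge0 ?ltW ?ltz_pmod.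
rewrite -modzNm -(modzDr _ d) addrC -{1}(gez0_abs (modz_ge0 r d_neq0)).
by rewrite subzn // modz_nat absz_nat.
Qed.

Definition wprod (R : realType) (N : nat) (x y z : R[i]) (n : nat) : R[i] :=
  \prod_(1 <= j < n.+1) (y / (z - x * omg R N ^+ j)).

Section FermatCurve.
Context {R : realType} {N : nat}.
Hypothesis N_odd : odd N.
Local Notation ω := (omg R N).
Local Notation h := (omg_half R N).
Local Notation wprod := (wprod R N).

Let N_gt0 : (0 < N)%N. Proof. by case: N N_odd. Qed.

Lemma omg_half_sqr : h ^+ 2 = ω.
Proof.
rewrite /omg_half -exprM (_ : _ * 2 = N + 1)%N ?exprD ?omg_expN ?mul1r //.
by have := odd_double_half N; rewrite N_odd; lia.
Qed.

Lemma omg_half_expN : h ^+ N = 1.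
Proof. by rewrite /omg_half -exprM mulnC exprM omg_expN // expr1n. Qed.

Lemma omg_half_neq0 : h != 0.
Proof.
apply/negP => /eqP h_eq0; move: omg_half_expN.
by rewrite h_eq0 expr0n gtn_eqF // => /eqP; rewrite eq_sym oner_eq0.
Qed.

Lemma fermat_rot (x y z : R[i]) : x ^+ N + y ^+ N = z ^+ N ->
  z ^+ N + (- h * y) ^+ N = (ω * x) ^+ N.
Proof.
move=> fermat; rewrite !exprMn omg_expN // exprNn omg_half_expN.
by rewrite -signr_odd N_odd expr1 mulr1 mulN1r mul1r -fermat addrK.
Qed.

Lemma wfunE (x y z : R[i]) (r : int) : wfun R N x y z r = wprod x y z `|(r %% N)%Z|.
Proof. by []. Qed.

Lemma wprodS (x y z : R[i]) (n : nat) :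
  wprod x y z n.+1 = wprod x y z n * (y / (z - x * ω ^+ n.+1)).
Proof. exact: big_nat_recr. Qed.

Lemma wprod_expN (x y z : R[i]) : x != 0 -> y != 0 -> x ^+ N + y ^+ N = z ^+ N ->
  wprod x y z N = 1.
Proof.
move=> x_neq0 y_neq0 fermat.
have shift : \prod_(1 <= j < N.+1) (z - x * ω ^+ j) = \prod_(0 <= j < N) (z - x * ω ^+ j).
  by rewrite big_nat_recr //= [RHS]big_ltn // omg_expN // expr0 mulrC.
rewrite /wprod prodf_div prodr_const_nat subn1 shift prod_subr_prim_root ?omg_prim_root //.
by rewrite -fermat addrC addKr divff // expf_neq0.
Qed.

Lemma wprod_modn (x y z : R[i]) (m : nat) : x != 0 -> y != 0 ->
  x ^+ N + y ^+ N = z ^+ N -> (m <= N)%N -> wprod x y z (m %% N) = wprod x y z m.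
Proof.
move=> x_neq0 y_neq0 fermat; rewrite leq_eqVlt => /predU1P[->|/modn_small-> //].
by rewrite modnn wprod_expN // /wprod big_geq.
Qed.

Lemma wprod_rot_factor (x y z : R[i]) (n : nat) : (n < N)%N ->
  (- h * y) / (ω * x - z * ω ^+ (N - n)) = y / (z - x * ω ^+ n.+1) * h ^+ n.*2.+1.
Proof.
move=> n_ltN; have n_leN := ltnW n_ltN.
have inv_rot : (ω ^+ (N - n))^-1 = ω ^+ n.
  by apply: mulr1_eq; rewrite -exprD (subnK n_leN) omg_expN.
have rot : ω * x - z * ω ^+ (N - n) = - ω ^+ (N - n) * (z - x * ω ^+ n.+1).
  have unit_rot : ω ^+ (N - n) * ω ^+ n = 1 by rewrite -exprD (subnK n_leN) omg_expN.
  by rewrite exprS -[ω * x]mulr1 -unit_rot; ring.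
have h_odd : h ^+ n.*2.+1 = h * ω ^+ n by rewrite exprS -muln2 mulnC exprM omg_half_sqr.
by rewrite rot invfM invrN inv_rot h_odd; ring.
Qed.

Lemma wprod_mul_rot (x y z : R[i]) (n : nat) : x != 0 -> y != 0 ->
  x ^+ N + y ^+ N = z ^+ N -> (n <= N)%N ->
  wprod x y z n * wprod z (- h * y) (ω * x) (N - n) * h ^+ (n ^ 2) = 1.
Proof.
move=> x_neq0 y_neq0 fermat n_leN; rewrite -(subKn n_leN).
elim: (N - n)%N (leq_subr n N) => [|m IH] m_leN.
  rewrite subn0 subnn wprod_expN // /wprod big_geq // mul1r.
  by rewrite (expr_dvd omg_half_expN) ?mulr1 // expnS dvdn_mulr.
move: IH; set k := (N - m.+1)%N.
have -> : (N - m = k.+1)%N by lia.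
have -> : (N - k.+1 = m)%N by lia.
have Nk : (N - k = m.+1)%N by lia.
move=> /(_ (ltnW m_leN)) <-.
rewrite Nk !wprodS -Nk wprod_rot_factor; last by lia.
have -> : (k.+1 ^ 2 = k ^ 2 + k.*2.+1)%N by rewrite !expnS !expn0; lia.
by rewrite exprD; ring.
Qed.

Lemma omg_quadratic_exp (k l : int) :
  ω ^ (k * l) * h ^ (- (l ^+ 2) - k ^+ 2) = (h ^+ (`|((k - l) %% N)%Z|%N ^ 2))^-1.
Proof.
have N_neq0 : N%:Z != 0 by rewrite -lt0n.
set n := `|((k - l) %% N)%Z|%N; set q := ((k - l) %/ N)%Z.
have nE : k - l = q * N + n%:Z by rewrite gez0_abs ?modz_ge0 // -divz_eq.
have expE : - (l ^+ 2) - k ^+ 2 + 2 * (k * l) = - (n ^ 2)%N%:Z + N%:Z * (- q * (q * N + 2 * n%:Z)).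
  by rewrite -[(n ^ 2)%N]/(n * n)%N PoszM -[k](subrK l) nE; ring.
rewrite -omg_half_sqr [h ^+ 2]exprnP exprz_exp mulrC -expfzDr ?omg_half_neq0 //.
rewrite expE expfzDr ?omg_half_neq0 // -exprz_exp -[h ^ N%:Z]exprnP omg_half_expN.
by rewrite exp1rz mulr1 -invr_expz.
Qed.
End FermatCurve.

Theorem lemma6p2 (R : realType) (N : nat) (hN3 : (3 <= N)%N) (hNodd : odd N)
  (x y z : R[i]) (hx : x != 0) (hy : y != 0) (hz : z != 0)
  (hfermat : x ^+ N + y ^+ N = z ^+ N) (k l : int) :
  wfun R N x y z (k - l) =
  omg R N ^ (k * l) * omg_half R N ^ (- (l ^+ 2) - k ^+ 2)
  / wfun R N z (- omg_half R N * y) (omg R N * x) (l - k).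
Proof.
have N_gt0 : (0 < N)%N by apply: leq_trans hN3.
have hy_rot : - omg_half R N * y != 0 by rewrite mulf_neq0 ?oppr_eq0 ?omg_half_neq0.
set n := `|((k - l) %% N)%Z|%N.
have n_ltN : (n < N)%N by rewrite -ltz_nat gez0_abs ?modz_ge0 ?ltz_pmod // -lt0n.
rewrite omg_quadratic_exp // !wfunE -[l - k]opprB absz_modNz // -/n.
rewrite wprod_modn ?leq_subr ?(fermat_rot hNodd x y z hfermat) //.
have := wprod_mul_rot hNodd x y z n hx hy hfermat (ltnW n_ltN).
set a := wprod R N _ _ _ n; set b := wprod R N _ _ _ (N - n).
move=> key; rewrite -invfM; apply/esym/mulr1_eq.
by rewrite -key; ring.
Qed.
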